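(* Let $N\ge0$ be an integer. For generic complex $a,b,c,d,q$, the unique coefficients $C_k^l$ ($0\le k,l\le N$) in the polynomial identity $$(ax;q^{-1})_k\,(bx;q^{-1})_{N-k}=\sum_{l=0}^N C_k^l\,(cx;q)_l\,(dx;q)_{N-l}$$ are $$C_k^l=q^{l(l-N)}\binom{N}{l}_q\frac{(q^{1-N}b/d;q)_l\,(q^{1-N}b/c;q)_{N-l}\,(q^{1-k}a/c;q)_k}{(q^{l-N}c/d;q)_l\,(q^{-l}d/c;q)_{N-l}\,(q^{1-N}b/c;q)_k}\;{}_4\phi_3\!\left[\begin{matrix}q^{-k},q^{-l},q^{k-N}b/a,q^{l-N}c/d\\ q^{-N},c/a,q^{1-N}b/d\end{matrix};q,q\right].$$
   Context: $(a;q)_k=\prod_{j=0}^{k-1}(1-aq^j)$ (for any base, so $(a;q^{-1})_k=\prod_{j=0}^{k-1}(1-aq^{-j})$), $\binom{N}{l}_q=\frac{(q;q)_N}{(q;q)_l(q;q)_{N-l}}$, and ${}_4\phi_3\!\left[\begin{matrix}a_1,\dots,a_4\\ b_1,b_2,b_3\end{matrix};q,z\right]=\sum_{k\ge0}\frac{(a_1,\dots,a_4;q)_k}{(q,b_1,b_2,b_3;q)_k}z^k$ (terminating). *)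

From mathcomp Require Import all_boot all_order all_algebra.
From mathcomp Require Import Rstruct complex.
From mathcomp Require Import mpoly.
Set Implicit Arguments. Unset Strict Implicit. Unset Printing Implicit Defensive.
Import Order.TTheory GRing.Theory Num.Theory.
Local Open Scope ring_scope.

Notation C := (Rdefinitions.R[i]).

Definition qpoch (a q : C) (k : nat) : C := \prod_(j < k) (1 - a * q ^+ j).

Definition qpochX (a q : C) (k : nat) : {poly C} :=
  \prod_(j < k) (1 - (a * q ^+ j) *: 'X).

Definition qbinom (q : C) (N l : nat) : C :=
  qpoch q q N / (qpoch q q l * qpoch q q (N - l)).

(* terminating 4phi3, summed over j = 0..M (in our use a1 = q^{-k} with
   k <= M, so all terms with j > k vanish and this is the full series) *)
Definition phi43 (a1 a2 a3 a4 b1 b2 b3 q z : C) (M : nat) : C :=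
  \sum_(j < M.+1)
    (qpoch a1 q j * qpoch a2 q j * qpoch a3 q j * qpoch a4 q j) /
    (qpoch q q j * qpoch b1 q j * qpoch b2 q j * qpoch b3 q j) * z ^+ j.

Definition Ccoef (N : nat) (a b c d q : C) (k l : nat) : C :=
  q ^ (l%:Z * (l%:Z - N%:Z)) * qbinom q N l *
  ((qpoch (q ^ (1 - N%:Z) * b / d) q l *
    qpoch (q ^ (1 - N%:Z) * b / c) q (N - l) *
    qpoch (q ^ (1 - k%:Z) * a / c) q k) /
   (qpoch (q ^ (l%:Z - N%:Z) * c / d) q l *
    qpoch (q ^ (- l%:Z) * d / c) q (N - l) *
    qpoch (q ^ (1 - N%:Z) * b / c) q k)) *
  phi43 (q ^ (- k%:Z)) (q ^ (- l%:Z)) (q ^ (k%:Z - N%:Z) * b / a)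
        (q ^ (l%:Z - N%:Z) * c / d)
        (q ^ (- N%:Z)) (c / a) (q ^ (1 - N%:Z) * b / d) q q N.

Definition pt5 (a b c d q : C) : 'I_5 -> C :=
  fun i => nth 0 [:: a; b; c; d; q] i.

Definition expansion (N : nat) (a b c d q : C) (k : nat) (D : nat -> C) : Prop :=
  qpochX a q^-1 k * qpochX b q^-1 (N - k) =
  \sum_(l < N.+1) D l *: (qpochX c q l * qpochX d q (N - l)).

From mathcomp Require Import all_boot all_order all_algebra.
From mathcomp Require Import Rstruct complex.
From mathcomp Require Import mpoly.
From mathcomp.algebra_tactics Require Import ring.
From mathcomp Require Import zify.
Import Order.TTheory GRing.Theory Num.Theory.
Local Open Scope ring_scope.
Set Implicit Arguments. Unset Strict Implicit. Unset Printing Implicit Defensive.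

(* Each product (be x; 1/q)_m expands in a basis (ga x; q)_i (de x; s)_r by a
   Pascal-type recursion: the new factor 1 - be q^-m x is an affine combination
   of the factors raising i or r, and the resulting two-term recurrence is solved
   by an explicit product of q-Pochhammer symbols.  Expanding twice, from
   (ax;1/q)_k (bx;1/q)_(N-k) to the basis (cx;q)_j (bx;1/q)_(N-j) and then to
   (cx;q)_l (dx;q)_(N-l), writes C_k^l as a convolution over j, whose j-th term is
   the prefactor times the j-th term of the 4phi3: both sides have the same
   successive ratios.  Evaluation at the points 1/(c q^s) makes the target basis
   triangular, which gives uniqueness.  Genericity only excludes zero denominators:
   a, b, c, d, q nonzero, the progressions a q^n, ..., d q^n kept apart, and q not
   a root of unity of small order; this is the nonvanishing of one polynomial. *)

Section PascalExpansion.
Variables (R : comNzRingType) (K : nat).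
Variables (Phi : nat -> nat -> {poly R}) (tau : nat -> {poly R}).
Variables (c lam mu e f : nat -> nat -> R) (b : nat -> R).
Hypotheses (tau0 : tau 0 = Phi 0 0) (c00 : c 0 0 = 1).
Hypothesis tauS : forall m, tau m.+1 = tau m * (1 - b m *: 'X).
Hypothesis PhiSr : forall i r, Phi i r.+1 = Phi i r * (1 - e i r *: 'X).
Hypothesis PhiSl : forall i r, Phi i.+1 r = Phi i r * (1 - f i r *: 'X).
Hypothesis lam_mu1 : forall i r, (i + r < K)%N -> lam i r + mu i r = 1.
Hypothesis lam_mu_b :
  forall i r, (i + r < K)%N -> lam i r * e i r + mu i r * f i r = b (i + r)%N.
Hypothesis c_rec0l : forall r, (r < K)%N -> c 0 r.+1 = lam 0 r * c 0 r.
Hypothesis c_rec0r : forall i, (i < K)%N -> c i.+1 0 = mu i 0 * c i 0.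
Hypothesis c_recS : forall i r, ((i + r).+1 < K)%N ->
  c i.+1 r.+1 = lam i.+1 r * c i.+1 r + mu i r.+1 * c i r.+1.

Lemma pascal_step i r : (i + r < K)%N ->
  Phi i r * (1 - b (i + r)%N *: 'X) = lam i r *: Phi i r.+1 + mu i r *: Phi i.+1 r.
Proof.
move=> hir; rewrite PhiSr PhiSl !scalerAr -mulrDr; congr (_ * _).
rewrite !scalerBr !scalerA addrACA -scalerDl lam_mu1 // scale1r.
by rewrite -opprD -scalerDl lam_mu_b.
Qed.

Lemma pascal_expansion m : (m <= K)%N ->
  tau m = \sum_(i < m.+1) c i (m - i)%N *: Phi i (m - i)%N.
Proof.
elim: m => [|m IH] hm; first by rewrite big_ord_recl big_ord0 /= c00 scale1r addr0.
rewrite tauS IH ?(ltnW hm) // big_distrl /=.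
have step (i : 'I_m.+1) : c i (m - i)%N *: Phi i (m - i)%N * (1 - b m *: 'X)
    = (c i (m - i)%N * lam i (m - i)%N) *: Phi i (m - i)%N.+1
    + (c i (m - i)%N * mu i (m - i)%N) *: Phi i.+1 (m - i)%N.
  have him : (i + (m - i) = m)%N by rewrite subnKC // -ltnS.
  rewrite -scalerAl -[in b m]him pascal_step ?him //.
  by rewrite scalerDr !scalerA.
rewrite (eq_bigr _ (fun i _ => step i)) big_split /=.
rewrite [X in X + _]big_ord_recl [X in _ + X]big_ord_recr /=.
rewrite big_ord_recl big_ord_recr /= -!addrA; congr (_ + _).
  by rewrite !subn0 c_rec0l // mulrC.
rewrite addrA; congr (_ + _); last by rewrite subnn /bump /= add1n subnn c_rec0r // mulrC.
rewrite -big_split /=; apply: eq_bigr => i _; rewrite /bump /= !add1n.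
have e1 : (m - i = (m - i.+1).+1)%N by rewrite subnSK.
rewrite subSS -[in LHS]e1 -scalerDl; congr (_ *: _).
rewrite e1 c_recS; last by rewrite -addSn subnKC.
by rewrite -e1 mulrC [_ * mu _ _]mulrC.
Qed.

End PascalExpansion.

Lemma qpoch0 (u s : C) : qpoch u s 0 = 1.
Proof. by rewrite /qpoch big_ord0. Qed.

Lemma qpochS (u s : C) n : qpoch u s n.+1 = qpoch u s n * (1 - u * s ^+ n).
Proof. by rewrite /qpoch big_ord_recr. Qed.

Lemma qpoch_recl (u s : C) n : qpoch u s n.+1 = (1 - u) * qpoch (u * s) s n.
Proof.
rewrite /qpoch big_ord_recl expr0 mulr1; congr (_ * _).
by apply: eq_bigr => i _; rewrite /= exprS mulrA.
Qed.

Lemma qpochS_shift (u s : C) k n :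
  qpoch (u * s ^+ k) s n.+1 = qpoch (u * s ^+ k) s n * (1 - u * s ^+ (k + n)).
Proof. by rewrite qpochS exprD mulrA. Qed.

Lemma qpoch_recl_shift (u s : C) k n :
  qpoch (u * s ^+ k) s n.+1 = (1 - u * s ^+ k) * qpoch (u * s ^+ k.+1) s n.
Proof. by rewrite qpoch_recl exprSr mulrA. Qed.

Lemma qpoch_recl_shiftV (u q : C) k n : q != 0 ->
  qpoch (u * q^-1 ^+ k.+1) q n.+1 = (1 - u * q^-1 ^+ k.+1) * qpoch (u * q^-1 ^+ k) q n.
Proof. by move=> hq; rewrite qpoch_recl exprSr -!mulrA mulVf // mulr1. Qed.

Lemma qpoch_shiftV (u q : C) k n : q != 0 -> 1 - u * q^-1 ^+ k.+1 * q ^+ n != 0 ->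
  qpoch (u * q^-1 ^+ k.+1) q n =
  (1 - u * q^-1 ^+ k.+1) * qpoch (u * q^-1 ^+ k) q n / (1 - u * q^-1 ^+ k.+1 * q ^+ n).
Proof. by move=> hq hn; rewrite -qpoch_recl_shiftV // qpochS mulfK. Qed.

Lemma qpoch_qqS (q : C) n : qpoch q q n.+1 = qpoch q q n * (1 - q ^+ n.+1).
Proof. by rewrite qpochS exprS. Qed.

Lemma qpoch_neq0 (u s : C) n :
  (forall t, (t < n)%N -> u * s ^+ t != 1) -> qpoch u s n != 0.
Proof.
move=> h; apply/prodf_neq0 => i _.
by rewrite subr_eq0 eq_sym; apply: h.
Qed.

Lemma qpoch_eq0 (u q : C) t n : (t < n)%N -> u * q ^+ t = 1 -> qpoch u q n = 0.
Proof. by move=> ht hu; rewrite /qpoch (bigD1 (Ordinal ht)) //= hu subrr mul0r. Qed.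

Lemma qpochX0 (u s : C) : qpochX u s 0 = 1.
Proof. by rewrite /qpochX big_ord0. Qed.

Lemma qpochXS (u s : C) n : qpochX u s n.+1 = qpochX u s n * (1 - (u * s ^+ n) *: 'X).
Proof. by rewrite /qpochX big_ord_recr. Qed.

Lemma qpochXD (u s : C) m n :
  qpochX u s (m + n) = qpochX u s m * qpochX (u * s ^+ m) s n.
Proof.
rewrite /qpochX big_split_ord; congr (_ * _).
by apply: eq_bigr => i _; rewrite /= exprD mulrA.
Qed.

Lemma horner_qpochX (u s x : C) n : (qpochX u s n).[x] = qpoch (u * x) s n.
Proof.
rewrite /qpochX /qpoch horner_prod; apply: eq_bigr => t _.
by rewrite hornerD hornerN hornerZ hornerX hornerC mulrAC.
Qed.

Lemma qbinom_addn (q : C) i r :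
  qbinom q (i + r) i = qpoch q q (i + r) / (qpoch q q i * qpoch q q r).
Proof. by rewrite /qbinom addKn. Qed.

(* [lam * (1 - e X) + mu * (1 - f X) = 1 - b X]. *)
Definition pascal_lam (f e b : C) : C := (f - b) / (f - e).
Definition pascal_mu (f e b : C) : C := (b - e) / (f - e).

Lemma qpochX_pascal K (be ga de q s : C) (c : nat -> nat -> C) :
  (forall i r, (i + r < K)%N -> ga * q ^+ i != de * s ^+ r) ->
  c 0 0 = 1 ->
  (forall r, (r < K)%N ->
     c 0 r.+1 = pascal_lam (ga * q ^+ 0) (de * s ^+ r) (be * q^-1 ^+ (0 + r)) * c 0 r) ->
  (forall i, (i < K)%N ->
     c i.+1 0 = pascal_mu (ga * q ^+ i) (de * s ^+ 0) (be * q^-1 ^+ (i + 0)) * c i 0) ->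
  (forall i r, ((i + r).+1 < K)%N -> c i.+1 r.+1 =
      pascal_lam (ga * q ^+ i.+1) (de * s ^+ r) (be * q^-1 ^+ (i.+1 + r)) * c i.+1 r
    + pascal_mu (ga * q ^+ i) (de * s ^+ r.+1) (be * q^-1 ^+ (i + r.+1)) * c i r.+1) ->
  forall m, (m <= K)%N -> qpochX be q^-1 m =
    \sum_(i < m.+1) c i (m - i)%N *: (qpochX ga q i * qpochX de s (m - i)%N).
Proof.
move=> hfe c00 c_rec0l c_rec0r c_recS.
have hfe' i r : (i + r < K)%N -> ga * q ^+ i - de * s ^+ r != 0.
  by move=> hir; rewrite subr_eq0 hfe.
apply: (@pascal_expansion _ K (fun i r => qpochX ga q i * qpochX de s r) _ c
  (fun i r => pascal_lam (ga * q ^+ i) (de * s ^+ r) (be * q^-1 ^+ (i + r)))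
  (fun i r => pascal_mu (ga * q ^+ i) (de * s ^+ r) (be * q^-1 ^+ (i + r)))
  (fun i r => de * s ^+ r) (fun i r => ga * q ^+ i) (fun m => be * q^-1 ^+ m)) => //.
- by rewrite !qpochX0 mulr1.
- by move=> m; rewrite qpochXS.
- by move=> i r; rewrite qpochXS mulrA.
- by move=> i r; rewrite qpochXS mulrAC.
- by move=> i r hir; rewrite /pascal_lam /pascal_mu -mulrDl addrA subrK divff ?hfe'.
- by move=> i r hir; rewrite /pascal_lam /pascal_mu; field; rewrite hfe'.
Qed.

Definition qsep (q x y : C) (M : nat) :=
  forall a b : nat, (a <= M)%N -> (b <= M)%N -> x * q ^+ a != y * q ^+ b.

Definition qnonunity (q : C) (M : nat) := forall a : nat, (0 < a <= M)%N -> q ^+ a != 1.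

Lemma qsep_sym q x y M : qsep q x y M -> qsep q y x M.
Proof. by move=> h a b ha hb; rewrite eq_sym h. Qed.

Lemma qsep_le q x y M M' : qsep q x y M -> (M' <= M)%N -> qsep q x y M'.
Proof. by move=> h hM a b ha hb; apply: h; lia. Qed.

Lemma qnonunity_le q M M' : qnonunity q M -> (M' <= M)%N -> qnonunity q M'.
Proof. by move=> h hM a ha; apply: h; lia. Qed.

Lemma qsep_shiftl q x y e M : qsep q x y (M + e) -> qsep q (x * q ^+ e) y M.
Proof. by move=> h a b ha hb; rewrite -mulrA -exprD; apply: h; lia. Qed.

Lemma qsep_shiftr q x y e M : qsep q x y (M + e) -> qsep q x (y * q ^+ e) M.
Proof. by move=> h a b ha hb; rewrite -[y * _ * _]mulrA -exprD; apply: h; lia. Qed.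

Lemma qsep_shiftVr q x y e M : q != 0 -> qsep q x y (M + e) -> qsep q x (y * q^-1 ^+ e) M.
Proof.
move=> hq h a b ha hb; have hh : x * q ^+ (a + e) != y * q ^+ b by apply: h; lia.
apply: contra_neq hh => E; rewrite exprD mulrA E exprVn.
have he : q ^+ e != 0 by rewrite expf_neq0.
by field.
Qed.

Lemma qsep_shiftVl q x y e M : q != 0 -> qsep q x y (M + e) -> qsep q (x * q^-1 ^+ e) y M.
Proof. by move=> hq h; apply/qsep_sym/qsep_shiftVr => //; apply: qsep_sym. Qed.

Section Separation.
Variables (q : C) (M : nat).
Hypothesis hq : q != 0.

Lemma qsep_subr_neq0 x y a b : qsep q x y M -> (a <= M)%N -> (b <= M)%N ->
  x * q ^+ a - y * q ^+ b != 0.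
Proof. by move=> h ha hb; rewrite subr_eq0 h. Qed.

Lemma qsep_subr_neq0_r0 x y a : qsep q x y M -> (a <= M)%N -> x * q ^+ a - y != 0.
Proof. by move=> h ha; have := qsep_subr_neq0 h ha (leq0n M); rewrite expr0 mulr1. Qed.

Lemma qsep_subr_neq0_l0 x y b : qsep q x y M -> (b <= M)%N -> x - y * q ^+ b != 0.
Proof. by move=> h hb; have := qsep_subr_neq0 h (leq0n M) hb; rewrite expr0 mulr1. Qed.

Lemma qsep_subr_neq0_00 x y : qsep q x y M -> x - y != 0.
Proof. by move=> h; have := qsep_subr_neq0 h (leq0n M) (leq0n M); rewrite !expr0 !mulr1. Qed.

Lemma qnonunity_subr_neq0 a : qnonunity q M -> (0 < a <= M)%N -> 1 - q ^+ a != 0.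
Proof. by move=> h ha; rewrite subr_eq0 eq_sym h. Qed.

Lemma qnonunity_subr_neq0' a : qnonunity q M -> (0 < a <= M)%N -> q ^+ a - 1 != 0.
Proof. by move=> h ha; rewrite subr_eq0 h. Qed.

Lemma qsep_ratio_neq1 x y a b : qsep q x y M -> y != 0 -> (a <= M)%N -> (b <= M)%N ->
  x / y * q^-1 ^+ a * q ^+ b != 1.
Proof.
move=> h hy ha hb; apply: contra_neq (h b a hb ha) => E.
have hqa : q ^+ a != 0 by rewrite expf_neq0.
have -> : x * q ^+ b = (x / y * q^-1 ^+ a * q ^+ b) * (y * q ^+ a).
  by rewrite exprVn; field; rewrite hy hqa.
by rewrite E mul1r.
Qed.

Lemma qsep_ratio_subr_neq0 x y a b : qsep q x y M -> y != 0 -> (a <= M)%N -> (b <= M)%N ->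
  1 - x / y * q^-1 ^+ a * q ^+ b != 0.
Proof. by move=> h hy ha hb; rewrite subr_eq0 eq_sym qsep_ratio_neq1. Qed.

Lemma qpoch_qsepV_neq0 x y a n : qsep q x y M -> y != 0 -> (a <= M)%N -> (n <= M.+1)%N ->
  qpoch (x / y * q^-1 ^+ a) q n != 0.
Proof.
move=> h hy ha hn; apply: qpoch_neq0 => t ht.
by apply: qsep_ratio_neq1 => //; lia.
Qed.

Lemma qpoch_qsep_neq0 x y n : qsep q x y M -> y != 0 -> (n <= M.+1)%N ->
  qpoch (x / y) q n != 0.
Proof. by move=> h hy hn; have := qpoch_qsepV_neq0 h hy (leq0n M) hn; rewrite expr0 mulr1. Qed.

Lemma qpoch_qsep_shift_neq0 x y a n : qsep q x y M -> y != 0 -> (a + n <= M.+1)%N ->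
  qpoch (x / y * q ^+ a) q n != 0.
Proof.
move=> h hy hn; apply: qpoch_neq0 => t ht.
have := @qsep_ratio_neq1 x y 0 (a + t) h hy (leq0n M).
by rewrite expr0 mulr1 exprD mulrA; apply; lia.
Qed.

Lemma qpochV_qsep_neq0 x y n : qsep q x y M -> y != 0 -> (n <= M.+1)%N ->
  qpoch (x / y) q^-1 n != 0.
Proof.
move=> h hy hn; apply: qpoch_neq0 => t ht.
have := @qsep_ratio_neq1 x y t 0 h hy.
by rewrite expr0 mulr1; apply; lia.
Qed.

Lemma qpoch_qq_neq0 n : qnonunity q M -> (n <= M)%N -> qpoch q q n != 0.
Proof.
move=> h hn; apply: qpoch_neq0 => t ht; rewrite -exprS h //.
by rewrite /= (leq_trans ht hn).
Qed.

End Separation.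

Ltac neq0_side :=
  rewrite -?exprD -?exprS -?mulrA -?exprD -?exprS;
  first [ done
        | apply: expf_neq0; done
        | match goal with H : qsep _ _ _ _ |- _ => apply: (qsep_subr_neq0 H); lia end
        | match goal with H : qsep _ _ _ _ |- _ => apply: (qsep_subr_neq0_r0 H); lia end
        | match goal with H : qsep _ _ _ _ |- _ => apply: (qsep_subr_neq0_l0 H); lia end
        | match goal with H : qsep _ _ _ _ |- _ => apply: (qsep_subr_neq0_00 H) end
        | match goal with H : qnonunity _ _ |- _ => apply: (qnonunity_subr_neq0 H); lia end
        | match goal with H : qnonunity _ _ |- _ => apply: (qnonunity_subr_neq0' H); lia end ].
Ltac neq0 := repeat (apply/andP; split); neq0_side.

Definition conn_qq (be ga de q : C) (i r : nat) : C :=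
  q^-1 ^+ (i * r) * qbinom q (i + r) i *
  qpoch (be / de * q^-1 ^+ r) q^-1 i * qpoch (be / ga * q^-1 ^+ i) q^-1 r /
  (qpoch (ga / de * q^-1 ^+ r) q i * qpoch (de / ga * q^-1 ^+ i) q r).

Section ConnectionQQ.
Variables (be ga de q : C) (M : nat).
Hypotheses (hq : q != 0) (hga : ga != 0) (hde : de != 0).
Hypotheses (s_gd : qsep q ga de M) (s_dg : qsep q de ga M) (qnu : qnonunity q M).

Lemma conn_qq_recS i r : ((i + r).+2 <= M)%N ->
  conn_qq be ga de q i.+1 r.+1 =
    pascal_lam (ga * q ^+ i.+1) (de * q ^+ r) (be * q^-1 ^+ (i.+1 + r))
      * conn_qq be ga de q i.+1 r
  + pascal_mu (ga * q ^+ i) (de * q ^+ r.+1) (be * q^-1 ^+ (i + r.+1))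
      * conn_qq be ga de q i r.+1.
Proof.
move=> hM; rewrite /conn_qq !qbinom_addn.
rewrite (qpochS_shift (be/de) q^-1 r.+1 i) (qpoch_recl_shift (be/de) q^-1 r i).
rewrite (qpochS_shift (be/ga) q^-1 i.+1 r) (qpoch_recl_shift (be/ga) q^-1 i r).
rewrite (qpoch_recl_shiftV (ga/de) r i hq) (qpochS (ga/de * q^-1^+r) q i).
rewrite (qpoch_recl_shiftV (de/ga) i r hq) (qpochS (de/ga * q^-1^+i) q r).
rewrite (@qpoch_shiftV (ga/de) q r i hq); last by apply: (qsep_ratio_subr_neq0 hq s_gd hde); lia.
rewrite (@qpoch_shiftV (de/ga) q i r hq); last by apply: (qsep_ratio_subr_neq0 hq s_dg hga); lia.
rewrite !addSn !addnS !qpoch_qqS !mulnS !mulSn /pascal_lam /pascal_mu.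
have hW : qpoch (ga / de * q^-1 ^+ r) q i != 0 by apply: (qpoch_qsepV_neq0 hq s_gd hde); lia.
have hV : qpoch (de / ga * q^-1 ^+ i) q r != 0 by apply: (qpoch_qsepV_neq0 hq s_dg hga); lia.
have hQ1 : qpoch q q (i + r) != 0 by apply: qpoch_qq_neq0 qnu _; lia.
have hQ2 : qpoch q q i != 0 by apply: qpoch_qq_neq0 qnu _; lia.
have hQ3 : qpoch q q r != 0 by apply: qpoch_qq_neq0 qnu _; lia.
set X := qpoch (be / de * q^-1 ^+ r.+1) q^-1 i.
set Y := qpoch (be / ga * q^-1 ^+ i.+1) q^-1 r.
set W := qpoch (ga / de * q^-1 ^+ r) q i.
set V := qpoch (de / ga * q^-1 ^+ i) q r.
set Q1 := qpoch q q (i + r).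
set Q2 := qpoch q q i.
set Q3 := qpoch q q r.
rewrite !exprVn !exprS !exprD.
field; neq0.
Qed.

Lemma conn_qq_rec0l r : (r.+1 <= M)%N ->
  conn_qq be ga de q 0 r.+1 =
  pascal_lam (ga * q ^+ 0) (de * q ^+ r) (be * q^-1 ^+ (0 + r)) * conn_qq be ga de q 0 r.
Proof.
move=> hM; rewrite /conn_qq !qbinom_addn !add0n !mul0n !expr0 !mulr1 !qpoch0 !mul1r.
rewrite (qpochS (be/ga) q^-1 r) (qpochS (de/ga) q r) qpoch_qqS /pascal_lam !mulr1.
have hV : qpoch (de / ga) q r != 0 by apply: (qpoch_qsep_neq0 hq s_dg hga); lia.
have hQ : qpoch q q r != 0 by apply: qpoch_qq_neq0 qnu _; lia.
set V := qpoch (de / ga) q r. set Y := qpoch (be / ga) q^-1 r. set Q := qpoch q q r.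
rewrite !exprVn.
field; neq0.
Qed.

Lemma conn_qq_rec0r i : (i.+1 <= M)%N ->
  conn_qq be ga de q i.+1 0 =
  pascal_mu (ga * q ^+ i) (de * q ^+ 0) (be * q^-1 ^+ (i + 0)) * conn_qq be ga de q i 0.
Proof.
move=> hM; rewrite /conn_qq !qbinom_addn !addn0 !muln0 !expr0 !mulr1 !qpoch0 !mul1r.
rewrite (qpochS (be/de) q^-1 i) (qpochS (ga/de) q i) qpoch_qqS /pascal_mu !mulr1.
have hV : qpoch (ga / de) q i != 0 by apply: (qpoch_qsep_neq0 hq s_gd hde); lia.
have hQ : qpoch q q i != 0 by apply: qpoch_qq_neq0 qnu _; lia.
set V := qpoch (ga / de) q i. set Y := qpoch (be / de) q^-1 i. set Q := qpoch q q i.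
rewrite !exprVn.
field; neq0.
Qed.

Lemma qpochXV_conn_qq m : (m.+1 <= M)%N ->
  qpochX be q^-1 m =
  \sum_(i < m.+1) conn_qq be ga de q i (m - i)%N *: (qpochX ga q i * qpochX de q (m - i)%N).
Proof.
move=> hm; apply: (@qpochX_pascal m) => //.
- by move=> i r hir; apply: s_gd; lia.
- by rewrite /conn_qq /qbinom !qpoch0 expr0; field.
- by move=> r hr; apply: conn_qq_rec0l; lia.
- by move=> i hi; apply: conn_qq_rec0r; lia.
- by move=> i r hir; apply: conn_qq_recS; lia.
Qed.

End ConnectionQQ.

Definition conn_qqV (be ga ep q : C) (i r : nat) : C :=
  qbinom q (i + r) i * qpoch (be / ep) q^-1 i * qpoch (be / ga * q^-1 ^+ i) q^-1 r /
  (qpoch (ga / ep * q ^+ r) q i * qpoch (ep / ga) q^-1 r).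

Section ConnectionQQV.
Variables (be ga ep q : C) (M : nat).
Hypotheses (hq : q != 0) (hga : ga != 0) (hep : ep != 0).
Hypotheses (s_ge : qsep q ga ep M) (s_eg : qsep q ep ga M) (qnu : qnonunity q M).

Lemma conn_qqV_recS i r : ((i + r).+2 <= M)%N ->
  conn_qqV be ga ep q i.+1 r.+1 =
    pascal_lam (ga * q ^+ i.+1) (ep * q^-1 ^+ r) (be * q^-1 ^+ (i.+1 + r))
      * conn_qqV be ga ep q i.+1 r
  + pascal_mu (ga * q ^+ i) (ep * q^-1 ^+ r.+1) (be * q^-1 ^+ (i + r.+1))
      * conn_qqV be ga ep q i r.+1.
Proof.
move=> hM; rewrite /conn_qqV !qbinom_addn (qpochS (be/ep) q^-1 i).
rewrite (qpochS_shift (be/ga) q^-1 i.+1 r) (qpoch_recl_shift (be/ga) q^-1 i r).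
rewrite (qpochS_shift (ga/ep) q r.+1 i) (qpoch_recl_shift (ga/ep) q r i).
rewrite (qpochS (ep/ga) q^-1 r) !addSn !addnS !qpoch_qqS /pascal_lam /pascal_mu.
have hZ : qpoch (ga / ep * q ^+ r.+1) q i != 0.
  by apply: (qpoch_qsep_shift_neq0 hq s_ge hep); lia.
have hV : qpoch (ep / ga) q^-1 r != 0 by apply: (qpochV_qsep_neq0 hq s_eg hga); lia.
have hQ1 : qpoch q q (i + r) != 0 by apply: qpoch_qq_neq0 qnu _; lia.
have hQ2 : qpoch q q i != 0 by apply: qpoch_qq_neq0 qnu _; lia.
have hQ3 : qpoch q q r != 0 by apply: qpoch_qq_neq0 qnu _; lia.
set X := qpoch (be / ep) q^-1 i.
set Y := qpoch (be / ga * q^-1 ^+ i.+1) q^-1 r.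
set Z := qpoch (ga / ep * q ^+ r.+1) q i.
set V := qpoch (ep / ga) q^-1 r.
set Q1 := qpoch q q (i + r).
set Q2 := qpoch q q i.
set Q3 := qpoch q q r.
rewrite !exprVn !exprS !exprD.
field; neq0.
Qed.

Lemma conn_qqV_rec0l r : (r.+1 <= M)%N ->
  conn_qqV be ga ep q 0 r.+1 =
  pascal_lam (ga * q ^+ 0) (ep * q^-1 ^+ r) (be * q^-1 ^+ (0 + r)) * conn_qqV be ga ep q 0 r.
Proof.
move=> hM; rewrite /conn_qqV !qbinom_addn !add0n !expr0 !mulr1 !qpoch0 ?mul1r.
rewrite (qpochS (be/ga) q^-1 r) (qpochS (ep/ga) q^-1 r) qpoch_qqS /pascal_lam !mulr1.
have hV : qpoch (ep / ga) q^-1 r != 0 by apply: (qpochV_qsep_neq0 hq s_eg hga); lia.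
have hQ : qpoch q q r != 0 by apply: qpoch_qq_neq0 qnu _; lia.
set V := qpoch (ep / ga) q^-1 r. set Y := qpoch (be / ga) q^-1 r. set Q := qpoch q q r.
rewrite !exprVn.
field; neq0.
Qed.

Lemma conn_qqV_rec0r i : (i.+1 <= M)%N ->
  conn_qqV be ga ep q i.+1 0 =
  pascal_mu (ga * q ^+ i) (ep * q^-1 ^+ 0) (be * q^-1 ^+ (i + 0)) * conn_qqV be ga ep q i 0.
Proof.
move=> hM; rewrite /conn_qqV !qbinom_addn !addn0 !expr0 !mulr1 !qpoch0 ?mul1r.
rewrite (qpochS (be/ep) q^-1 i) (qpochS (ga/ep) q i) qpoch_qqS /pascal_mu !mulr1.
have hV : qpoch (ga / ep) q i != 0 by apply: (qpoch_qsep_neq0 hq s_ge hep); lia.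
have hQ : qpoch q q i != 0 by apply: qpoch_qq_neq0 qnu _; lia.
set V := qpoch (ga / ep) q i. set Y := qpoch (be / ep) q^-1 i. set Q := qpoch q q i.
rewrite !exprVn.
field; neq0.
Qed.

Lemma qpochXV_conn_qqV m : (m.+1 <= M)%N ->
  qpochX be q^-1 m =
  \sum_(i < m.+1) conn_qqV be ga ep q i (m - i)%N *: (qpochX ga q i * qpochX ep q^-1 (m - i)%N).
Proof.
move=> hm; apply: (@qpochX_pascal m) => //.
- move=> i r hir.
  have : ga * q ^+ (i + r) != ep * q ^+ 0 by apply: s_ge; lia.
  apply: contra_neq => E; rewrite expr0 mulr1 exprD mulrA E -mulrA exprVn mulVf ?mulr1 //.
  by rewrite expf_neq0.
- by rewrite /conn_qqV /qbinom !qpoch0; field.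
- by move=> r hr; apply: conn_qqV_rec0l; lia.
- by move=> i hi; apply: conn_qqV_rec0r; lia.
- by move=> i r hir; apply: conn_qqV_recS; lia.
Qed.

End ConnectionQQV.

Lemma sum_shift_cond (V : zmodType) (F : nat -> V) j N : (j <= N)%N ->
  \sum_(i < (N - j).+1) F (j + i)%N = \sum_(l < N.+1) (if (j <= l)%N then F l else 0).
Proof.
move=> hj; rewrite -big_mkcond /=.
have -> : \sum_(l < N.+1 | (j <= l)%N) F l = \sum_(j <= l < N.+1) F l.
  by rewrite big_geq_mkord.
have := big_addn 0 N.+1 j predT F; rewrite add0n => ->.
by rewrite big_mkord subSn //; apply: eq_bigr => i _; rewrite addnC.
Qed.

Lemma sum_widen_cond (V : zmodType) (F : nat -> V) k N : (k <= N)%N ->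
  \sum_(j < k.+1) F j = \sum_(j < N.+1) (if (j <= k)%N then F j else 0).
Proof. by move=> hk; rewrite -big_mkcond (big_ord_widen _ F (_ : k.+1 <= N.+1)%N). Qed.

Definition basis_cd (c d q : C) (N l : nat) : {poly C} := qpochX c q l * qpochX d q (N - l).

Definition coef_ac (a b c q : C) (N k j : nat) : C :=
  conn_qqV a c (b * q^-1 ^+ (N - k)) q j (k - j).

Definition coef_cd (b c d q : C) (N j l : nat) : C :=
  conn_qq b (c * q ^+ j) d q (l - j) (N - l).

Section Composition.
Variables (a b c d q : C) (N M : nat).
Hypotheses (hq : q != 0) (hb : b != 0) (hc : c != 0) (hd : d != 0).
Hypotheses (hNM : (2 * N + 2 <= M)%N) (qnu : qnonunity q M).
Hypotheses (s_cb : qsep q c b M) (s_bc : qsep q b c M).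
Hypotheses (s_cd : qsep q c d M) (s_dc : qsep q d c M).

Lemma expand_cd j : (j <= N)%N ->
  qpochX c q j * qpochX b q^-1 (N - j) =
  \sum_(l < N.+1) (if (j <= l)%N then coef_cd b c d q N j l *: basis_cd c d q N l else 0).
Proof.
move=> hj; have hcj : c * q ^+ j != 0 by rewrite mulf_neq0 // expf_neq0.
rewrite (@qpochXV_conn_qq b (c * q ^+ j) d q (N - j).+1 hq hcj hd); first last.
- by [].
- by apply: qnonunity_le qnu _; lia.
- by apply: qsep_shiftr; apply: qsep_le s_dc _; lia.
- by apply: qsep_shiftl; apply: qsep_le s_cd _; lia.
rewrite big_distrr /= -(sum_shift_cond (fun l => coef_cd b c d q N j l *: basis_cd c d q N l) hj).
apply: eq_bigr => i _.
by rewrite -scalerAr mulrA -qpochXD /coef_cd /basis_cd addKn subnDA.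
Qed.

(* Expand [(ax;1/q)_k] in the basis [(cx;q)_j (q^(k-N) b x;1/q)_(k-j)], absorb
   [(bx;1/q)_(N-k)], then expand each [(bx;1/q)_(N-j)] with [expand_cd]. *)
Lemma expand_ab_cd k : (k <= N)%N ->
  qpochX a q^-1 k * qpochX b q^-1 (N - k) =
  \sum_(l < N.+1) (\sum_(j < N.+1)
     (if ((j <= k) && (j <= l))%N then coef_ac a b c q N k j * coef_cd b c d q N j l else 0))
   *: basis_cd c d q N l.
Proof.
move=> hk.
have hep : b * q^-1 ^+ (N - k) != 0 by rewrite mulf_neq0 // expf_neq0 // invr_neq0.
rewrite (@qpochXV_conn_qqV a c (b * q^-1 ^+ (N - k)) q k.+1 hq hc hep); first last.
- by [].
- by apply: qnonunity_le qnu _; lia.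
- by apply: qsep_shiftVl => //; apply: qsep_le s_bc _; lia.
- by apply: qsep_shiftVr => //; apply: qsep_le s_cb _; lia.
rewrite big_distrl /=.
transitivity (\sum_(j < k.+1) coef_ac a b c q N k j *: (qpochX c q j * qpochX b q^-1 (N - j))).
  apply: eq_bigr => j _; rewrite -scalerAl -mulrA [qpochX (b * _) _ _ * _]mulrC -qpochXD.
  by have -> : (N - k + (k - j) = N - j)%N by have := ltn_ord j; lia.
rewrite (sum_widen_cond (fun j => coef_ac a b c q N k j *: (qpochX c q j * qpochX b q^-1 (N - j))) hk).
transitivity (\sum_(j < N.+1) \sum_(l < N.+1)
   (if ((j <= k) && (j <= l))%N then coef_ac a b c q N k j * coef_cd b c d q N j l else 0)
     *: basis_cd c d q N l).
  apply: eq_bigr => j _; case: ifP => hjk; last by rewrite big1 // => l _; rewrite scale0r.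
  rewrite expand_cd; last by have := ltn_ord j; lia.
  rewrite scaler_sumr; apply: eq_bigr => l _.
  by case: ifP => hjl; rewrite ?scalerA // scaler0 scale0r.
by rewrite exchange_big /=; apply: eq_bigr => l _; rewrite scaler_suml.
Qed.

End Composition.

Section Ratios.
Variables (q : C) (M : nat).
Hypotheses (hq : q != 0) (qnu : qnonunity q M).

Lemma conn_qqV_ratio be ga ep j r : ga != 0 -> ep != 0 ->
  qsep q ga ep M -> qsep q be ga M -> ((j + r).+2 <= M)%N ->
  conn_qqV be ga ep q j.+1 r = conn_qqV be ga ep q j r.+1 *
   ((1 - q ^+ r.+1) / (1 - q ^+ j.+1) * (1 - be / ep * q^-1 ^+ j) /
    ((1 - be / ga * q^-1 ^+ j) * (1 - ga / ep * q ^+ r)) * (1 - ep / ga * q^-1 ^+ r)).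
Proof.
move=> hga hep s_ge s_bg hM; have s_eg := qsep_sym s_ge; have s_gb := qsep_sym s_bg.
rewrite /conn_qqV !qbinom_addn (qpochS (be/ep) q^-1 j) (qpoch_recl_shift (be/ga) q^-1 j r).
rewrite (qpoch_recl_shift (ga/ep) q r j) (qpochS (ep/ga) q^-1 r) !addSn !addnS !qpoch_qqS.
have hZ : qpoch (ga / ep * q ^+ r.+1) q j != 0.
  by apply: (qpoch_qsep_shift_neq0 hq s_ge hep); lia.
have hV : qpoch (ep / ga) q^-1 r != 0 by apply: (qpochV_qsep_neq0 hq s_eg hga); lia.
have hQ1 : qpoch q q (j + r) != 0 by apply: qpoch_qq_neq0 qnu _; lia.
have hQ2 : qpoch q q j != 0 by apply: qpoch_qq_neq0 qnu _; lia.
have hQ3 : qpoch q q r != 0 by apply: qpoch_qq_neq0 qnu _; lia.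
have hY : 1 - be / ga * q^-1 ^+ j != 0.
  have := qsep_ratio_subr_neq0 hq s_bg hga (_ : j <= M)%N (leq0n M).
  by rewrite expr0 mulr1; apply; lia.
set X := qpoch (be / ep) q^-1 j.
set Y := qpoch (be / ga * q^-1 ^+ j.+1) q^-1 r.
set Z := qpoch (ga / ep * q ^+ r.+1) q j.
set V := qpoch (ep / ga) q^-1 r.
set Q1 := qpoch q q (j + r).
set Q2 := qpoch q q j.
set Q3 := qpoch q q r.
move: hY; rewrite !exprVn !exprS => hY.
field; neq0.
Qed.

Lemma conn_qq_shift_ratio be ga de j r2 r3 : ga != 0 -> de != 0 ->
  qsep q ga de M -> qsep q be de M -> ((j + r2 + r3).+2 <= M)%N ->
  conn_qq be (ga * q ^+ j.+1) de q r2 r3 = conn_qq be (ga * q ^+ j) de q r2.+1 r3 *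
   (q ^+ r3 * (1 - q ^+ r2.+1) / (1 - q ^+ (r2 + r3).+1) *
    (1 - ga * q ^+ j / de * q^-1 ^+ r3) / (1 - be / de * q^-1 ^+ (r3 + r2))).
Proof.
move=> hga hde s_gd s_bd hM; have s_dg := qsep_sym s_gd; have s_db := qsep_sym s_bd.
have hgj : ga * q ^+ j != 0 by rewrite mulf_neq0 // expf_neq0.
have E1 : be / (ga * q ^+ j.+1) * q^-1 ^+ r2 = be / (ga * q ^+ j) * q^-1 ^+ r2.+1.
  by rewrite !exprVn !exprS; field; neq0.
have E2 : de / (ga * q ^+ j.+1) * q^-1 ^+ r2 = de / (ga * q ^+ j) * q^-1 ^+ r2.+1.
  by rewrite !exprVn !exprS; field; neq0.
have E3 : ga * q ^+ j.+1 / de * q^-1 ^+ r3 = ga * q ^+ j / de * q^-1 ^+ r3 * q.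
  by rewrite !exprS; field.
rewrite /conn_qq !qbinom_addn E1 E2 E3 (qpochS_shift (be/de) q^-1 r3 r2).
rewrite (qpoch_recl (ga * q ^+ j / de * q^-1 ^+ r3) q r2) !addSn !qpoch_qqS.
have hW : qpoch (ga * q ^+ j / de * q^-1 ^+ r3 * q) q r2 != 0.
  have s_gd' : qsep q (ga * q ^+ j.+1) de (r2 + r3).+1.
    by apply: qsep_shiftl; apply: qsep_le s_gd _; lia.
  by rewrite -E3; apply: (qpoch_qsepV_neq0 hq s_gd' hde); lia.
have hV : qpoch (de / (ga * q ^+ j) * q^-1 ^+ r2.+1) q r3 != 0.
  have s_dg' : qsep q de (ga * q ^+ j) (r2 + r3).+1.
    by apply: qsep_shiftr; apply: qsep_le s_dg _; lia.
  by apply: (qpoch_qsepV_neq0 hq s_dg' hgj); lia.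
have hQ1 : qpoch q q (r2 + r3) != 0 by apply: qpoch_qq_neq0 qnu _; lia.
have hQ2 : qpoch q q r2 != 0 by apply: qpoch_qq_neq0 qnu _; lia.
have hQ3 : qpoch q q r3 != 0 by apply: qpoch_qq_neq0 qnu _; lia.
have hB : 1 - be / de * q^-1 ^+ (r3 + r2) != 0.
  have := qsep_ratio_subr_neq0 hq s_bd hde (_ : r3 + r2 <= M)%N (leq0n M).
  by rewrite expr0 mulr1; apply; lia.
set X := qpoch (be / de * q^-1 ^+ r3) q^-1 r2.
set Y := qpoch (be / (ga * q ^+ j) * q^-1 ^+ r2.+1) q^-1 r3.
set W := qpoch (ga * q ^+ j / de * q^-1 ^+ r3 * q) q r2.
set V := qpoch (de / (ga * q ^+ j) * q^-1 ^+ r2.+1) q r3.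
set Q1 := qpoch q q (r2 + r3).
set Q2 := qpoch q q r2.
set Q3 := qpoch q q r3.
move: hB; rewrite !mulSn !exprVn !exprS !exprD => hB.
field; neq0.
Qed.

End Ratios.

Definition phi43_term (a1 a2 a3 a4 b1 b2 b3 q : C) (j : nat) : C :=
  (qpoch a1 q j * qpoch a2 q j * qpoch a3 q j * qpoch a4 q j) /
  (qpoch q q j * qpoch b1 q j * qpoch b2 q j * qpoch b3 q j) * q ^+ j.

Lemma phi43_termS a1 a2 a3 a4 b1 b2 b3 q j :
  phi43_term a1 a2 a3 a4 b1 b2 b3 q j.+1 = phi43_term a1 a2 a3 a4 b1 b2 b3 q j *
  ((1 - a1 * q ^+ j) * (1 - a2 * q ^+ j) * (1 - a3 * q ^+ j) * (1 - a4 * q ^+ j) * q /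
   ((1 - q * q ^+ j) * (1 - b1 * q ^+ j) * (1 - b2 * q ^+ j) * (1 - b3 * q ^+ j))).
Proof. by rewrite /phi43_term !qpochS exprSr !invfM; ring. Qed.

Lemma exprz_Nnat (q : C) n : q ^ (- n%:Z) = (q ^+ n)^-1.
Proof. by rewrite -exprnN. Qed.

Lemma exprz_subnat (q : C) m n : q != 0 -> q ^ (m%:Z - n%:Z) = q ^+ m / q ^+ n.
Proof. by move=> hq; rewrite expfzDr // -exprnN. Qed.

Lemma exprz_1subnat (q : C) n : q != 0 -> q ^ (1 - n%:Z) = q / q ^+ n.
Proof. by move=> hq; rewrite expfzDr // -exprnN expr1z. Qed.

Lemma qpoch_rev (u q : C) s n : q != 0 ->
  qpoch (u * q ^ (1 - (s + n)%N%:Z)) q n = qpoch (u * q^-1 ^+ s) q^-1 n.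
Proof.
move=> hq; rewrite /qpoch (reindex_inj rev_ord_inj) /=; apply: eq_bigr => t _.
congr (1 - _); rewrite exprz_1subnat // !exprVn.
have -> : (s + n = s + (n - t.+1) + t.+1)%N by have := ltn_ord t; lia.
by rewrite !exprD !exprS; field; neq0.
Qed.

Definition Ccoef_pre (N : nat) (a b c d q : C) (k l : nat) : C :=
  q ^ (l%:Z * (l%:Z - N%:Z)) * qbinom q N l *
  ((qpoch (q ^ (1 - N%:Z) * b / d) q l *
    qpoch (q ^ (1 - N%:Z) * b / c) q (N - l) *
    qpoch (q ^ (1 - k%:Z) * a / c) q k) /
   (qpoch (q ^ (l%:Z - N%:Z) * c / d) q l *
    qpoch (q ^ (- l%:Z) * d / c) q (N - l) *
    qpoch (q ^ (1 - N%:Z) * b / c) q k)).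

Definition Ccoef_summand (N : nat) (a b c d q : C) (k l j : nat) : C :=
  phi43_term (q ^ (- k%:Z)) (q ^ (- l%:Z)) (q ^ (k%:Z - N%:Z) * b / a)
     (q ^ (l%:Z - N%:Z) * c / d) (q ^ (- N%:Z)) (c / a) (q ^ (1 - N%:Z) * b / d) q j.

Lemma CcoefE N a b c d q k l :
  Ccoef N a b c d q k l = \sum_(j < N.+1) Ccoef_pre N a b c d q k l * Ccoef_summand N a b c d q k l j.
Proof. by rewrite /Ccoef /phi43 mulr_sumr. Qed.

Lemma Ccoef_pre_conn N a b c d q k l : q != 0 -> c != 0 -> d != 0 -> qpoch q q k != 0 ->
  (k <= N)%N -> (l <= N)%N ->
  Ccoef_pre N a b c d q k l = coef_ac a b c q N k 0 * coef_cd b c d q N 0 l.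
Proof.
move=> hq hc hd hQk hk hl.
rewrite /Ccoef_pre /coef_ac /coef_cd /conn_qqV /conn_qq !subn0 expr0 !mulr1 !add0n.
rewrite !qpoch0 !mul1r !mulr1.
have R1 : qpoch (q ^ (1 - N%:Z) * b / d) q l = qpoch (b / d * q^-1 ^+ (N - l)) q^-1 l.
  by rewrite -qpoch_rev // subnK //; congr qpoch; set z := q ^ _; ring.
have R2 : qpoch (q ^ (1 - N%:Z) * b / c) q (N - l) = qpoch (b / c * q^-1 ^+ l) q^-1 (N - l).
  by rewrite -qpoch_rev // subnKC //; congr qpoch; set z := q ^ _; ring.
have R3 : qpoch (q ^ (1 - k%:Z) * a / c) q k = qpoch (a / c) q^-1 k.
  have := qpoch_rev (a / c) 0 k hq; rewrite add0n expr0 mulr1 => <-.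
  by congr qpoch; set z := q ^ _; ring.
have R4 : qpoch (q ^ (1 - N%:Z) * b / c) q k = qpoch (b * q^-1 ^+ (N - k) / c) q^-1 k.
  rewrite (_ : b * q^-1 ^+ (N - k) / c = b / c * q^-1 ^+ (N - k)); last by ring.
  by rewrite -qpoch_rev // subnK //; congr qpoch; set z := q ^ _; ring.
have R5 : qpoch (q ^ (l%:Z - N%:Z) * c / d) q l = qpoch (c / d * q^-1 ^+ (N - l)) q l.
  congr qpoch; rewrite exprz_subnat // exprVn.
  have -> : (N = l + (N - l))%N by lia.
  by rewrite addKn exprD; field; neq0.
have R6 : qpoch (q ^ (- l%:Z) * d / c) q (N - l) = qpoch (d / c * q^-1 ^+ l) q (N - l).
  by congr qpoch; rewrite exprz_Nnat exprVn; ring.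
have R7 : q ^ (l%:Z * (l%:Z - N%:Z)) = q^-1 ^+ (l * (N - l)).
  rewrite exprVn exprnN; congr (q ^ _).
  have -> : (N = l + (N - l))%N by lia.
  by rewrite addKn; set X := (N - l)%N; rewrite !PoszD !PoszM; lia.
have R8 : qbinom q N l = qbinom q (l + (N - l)) l by rewrite subnKC.
rewrite R1 R2 R3 R4 R5 R6 R7 R8 /qbinom addKn subn0 qpoch0 mul1r ?invr1 mulfV // ?mul1r.
by rewrite !invfM; ring.
Qed.

(* Consecutive summands of the [4phi3] have the same ratio as consecutive
   products of connection coefficients, with [k = j+1+r1], [l = j+1+r2],
   [N - l = r3], [N - k = r4]. *)
Lemma phi43_ratio_conn_ratio (a b c d q : C) M j r1 r2 r3 r4 :
  q != 0 -> a != 0 -> b != 0 -> c != 0 -> d != 0 -> qnonunity q M ->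
  qsep q b d M -> qsep q b c M -> qsep q a c M ->
  ((j + r1 + r2 + r3 + r4).+2 <= M)%N -> (r2 + r3 = r1 + r4)%N ->
  (1 - q ^ (- (j.+1 + r1)%N%:Z) * q ^+ j) * (1 - q ^ (- (j.+1 + r2)%N%:Z) * q ^+ j) *
  (1 - q ^ ((j.+1 + r1)%N%:Z - (j.+1 + r1 + r4)%N%:Z) * b / a * q ^+ j) *
  (1 - q ^ ((j.+1 + r2)%N%:Z - (j.+1 + r1 + r4)%N%:Z) * c / d * q ^+ j) * q /
  ((1 - q * q ^+ j) * (1 - q ^ (- (j.+1 + r1 + r4)%N%:Z) * q ^+ j) * (1 - c / a * q ^+ j) *
   (1 - q ^ (1 - (j.+1 + r1 + r4)%N%:Z) * b / d * q ^+ j))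
 =
  ((1 - q ^+ r1.+1) / (1 - q ^+ j.+1) * (1 - a / (b * q^-1 ^+ r4) * q^-1 ^+ j) /
    ((1 - a / c * q^-1 ^+ j) * (1 - c / (b * q^-1 ^+ r4) * q ^+ r1)) *
    (1 - (b * q^-1 ^+ r4) / c * q^-1 ^+ r1)) *
  (q ^+ r3 * (1 - q ^+ r2.+1) / (1 - q ^+ (r2 + r3).+1) *
    (1 - c * q ^+ j / d * q^-1 ^+ r3) / (1 - b / d * q^-1 ^+ (r3 + r2))).
Proof.
move=> hq ha hb hc hd qnu s_bd s_bc s_ac hM hr.
have s_db := qsep_sym s_bd; have s_ca := qsep_sym s_ac.
rewrite !exprz_Nnat !exprz_subnat // ?exprz_1subnat // ?expr1.
have hr2 : q ^+ r2 != 0 by rewrite expf_neq0.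
have E3 : q ^+ r3 = q ^+ r1 * q ^+ r4 / q ^+ r2.
  by rewrite -exprD -hr exprD; field.
have E23 : q ^+ (r2 + r3).+1 = q * q ^+ r1 * q ^+ r4.
  by rewrite hr exprS exprD mulrA.
have E32 : q^-1 ^+ (r3 + r2) = (q ^+ r1 * q ^+ r4)^-1.
  by rewrite exprVn addnC hr exprD.
rewrite E23 E32 !exprVn E3 !exprS !exprD.
field; neq0.
Qed.

Record generic (M : nat) (a b c d q : C) : Prop := Generic {
  gen_q : q != 0; gen_a : a != 0; gen_b : b != 0; gen_c : c != 0; gen_d : d != 0;
  gen_qnu : qnonunity q M;
  gen_ac : qsep q a c M; gen_bc : qsep q b c M;
  gen_bd : qsep q b d M; gen_cd : qsep q c d M }.

Section GenericExpansion.
Variables (N M : nat) (a b c d q : C).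
Hypotheses (G : generic M a b c d q) (hNM : (2 * N + 2 <= M)%N).
Let hq := gen_q G.
Let hc := gen_c G.
Let qnu := gen_qnu G.

Lemma Ccoef_summand_eq0 k l j : (k <= N)%N -> (l <= N)%N -> ~~ ((j <= k) && (j <= l))%N ->
  Ccoef_summand N a b c d q k l j = 0.
Proof.
move=> hk hl /nandP[]; rewrite -ltnNge => h; rewrite /Ccoef_summand /phi43_term.
  by rewrite (@qpoch_eq0 _ _ k) // ?mul0r // exprz_Nnat mulVf // expf_neq0.
by rewrite (@qpoch_eq0 (q ^ (- l%:Z)) _ l) // ?mulr0 ?mul0r // exprz_Nnat mulVf // expf_neq0.
Qed.

Lemma Ccoef_pre_summand k l j : (k <= N)%N -> (l <= N)%N -> (j <= k)%N -> (j <= l)%N ->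
  Ccoef_pre N a b c d q k l * Ccoef_summand N a b c d q k l j =
  coef_ac a b c q N k j * coef_cd b c d q N j l.
Proof.
move=> hk hl; elim: j => [|j IH] hjk hjl.
  rewrite /Ccoef_summand /phi43_term !qpoch0 expr0 !mulr1 invr1 mulr1 mulr1.
  by apply: Ccoef_pre_conn => //; [exact: gen_d G | apply: qpoch_qq_neq0 qnu _; lia].
rewrite {1}/Ccoef_summand phi43_termS -/(Ccoef_summand N a b c d q k l j) mulrA.
rewrite IH ?(ltnW hjk) ?(ltnW hjl) //.
set r1 := (k - j.+1)%N; set r2 := (l - j.+1)%N; set r3 := (N - l)%N; set r4 := (N - k)%N.
have hk1 : k = (j.+1 + r1)%N by rewrite /r1; lia.
have hl1 : l = (j.+1 + r2)%N by rewrite /r2; lia.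
have hN1 : N = (j.+1 + r1 + r4)%N by rewrite /r1 /r4; lia.
have e1 : (k - j = r1.+1)%N by rewrite /r1; lia.
have e2 : (l - j = r2.+1)%N by rewrite /r2; lia.
rewrite /coef_ac /coef_cd -/r1 -/r2 -/r3 -/r4 e1 e2.
have hep : b * q^-1 ^+ r4 != 0 by rewrite mulf_neq0 ?(gen_b G) // expf_neq0 // invr_neq0.
rewrite (@conn_qqV_ratio q (M - r4) hq); first last.
- by rewrite /r1 /r4; lia.
- by apply: qsep_le (gen_ac G) _; lia.
- by apply: qsep_shiftVr => //; apply: qsep_le (qsep_sym (gen_bc G)) _; lia.
- exact: hep.
- exact: hc.
- by apply: qnonunity_le qnu _; lia.
rewrite (@conn_qq_shift_ratio q M hq qnu); first last.
- by rewrite /r2 /r3; lia.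
- exact: gen_bd G.
- exact: gen_cd G.
- exact: gen_d G.
- exact: hc.
rewrite hk1 hl1 hN1 (@phi43_ratio_conn_ratio a b c d q M j r1 r2 r3 r4) //.
- by ring.
- exact: gen_a G.
- exact: gen_b G.
- exact: gen_d G.
- exact: gen_bd G.
- exact: gen_bc G.
- exact: gen_ac G.
- by rewrite /r1 /r2 /r3 /r4; lia.
- by rewrite /r1 /r2 /r3 /r4; lia.
Qed.

Lemma Ccoef_conv k l : (k <= N)%N -> (l <= N)%N ->
  Ccoef N a b c d q k l = \sum_(j < N.+1)
    (if ((j <= k) && (j <= l))%N then coef_ac a b c q N k j * coef_cd b c d q N j l else 0).
Proof.
move=> hk hl; rewrite CcoefE; apply: eq_bigr => j _.
case: ifP => [/andP[hjk hjl] | h]; first exact: Ccoef_pre_summand.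
by rewrite Ccoef_summand_eq0 ?h ?mulr0.
Qed.

End GenericExpansion.

Section Uniqueness.
Variables (N M : nat) (a b c d q : C).
Hypotheses (G : generic M a b c d q) (hNM : (2 * N + 2 <= M)%N).
Let hq := gen_q G.
Let hc := gen_c G.
Let hd := gen_d G.
Let qnu := gen_qnu G.

(* Evaluation at the points [1 / (c q^s)] makes the basis triangular. *)
Lemma basis_cd_eval_lt s l : (s < l)%N -> (basis_cd c d q N l).[(c * q ^+ s)^-1] = 0.
Proof.
move=> hsl; rewrite /basis_cd hornerM horner_qpochX (@qpoch_eq0 _ _ s) ?mul0r //.
have hqs : q ^+ s != 0 by rewrite expf_neq0.
by field; neq0.
Qed.

Lemma basis_cd_eval_diag s : (s <= N)%N -> (basis_cd c d q N s).[(c * q ^+ s)^-1] != 0.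
Proof.
move=> hs; rewrite /basis_cd hornerM !horner_qpochX mulf_neq0 //.
  apply: qpoch_neq0 => t ht.
  have : q ^+ (s - t) != 1 by apply: qnu; lia.
  apply: contra_neq => E.
  have hqt : q ^+ t != 0 by rewrite expf_neq0.
  have -> : q ^+ (s - t) = (c * (c * q ^+ s)^-1 * q ^+ t)^-1.
    have -> : (s = (s - t) + t)%N by lia.
    by rewrite addnK exprD; field; neq0.
  by rewrite E invr1.
have -> : d * (c * q ^+ s)^-1 = d / c * q^-1 ^+ s by rewrite exprVn; field; neq0.
by apply: (qpoch_qsepV_neq0 hq (qsep_sym (gen_cd G)) hc); lia.
Qed.

Lemma basis_cd_coef_eq0 (D : nat -> C) :
  \sum_(l < N.+1) D l *: basis_cd c d q N l = 0 -> forall l, (l <= N)%N -> D l = 0.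
Proof.
move=> H0; suff Dle s : (s <= N)%N -> forall l, (l <= s)%N -> D l = 0.
  by move=> l hl; apply: (Dle l).
elim: s => [|s IH] hs l hl.
  have := congr1 (fun p => p.[(c * q ^+ 0)^-1]) H0; rewrite horner_sum hornerC /=.
  rewrite big_ord_recl /= big1 => [|i _]; last by rewrite hornerZ basis_cd_eval_lt ?mulr0.
  rewrite addr0 hornerZ => /eqP; rewrite mulf_eq0 (negPf (basis_cd_eval_diag (leq0n N))) orbF.
  by move/eqP; have -> : l = 0%N by lia.
case: (ltnP l s.+1) => hls; first by apply: IH => //; lia.
have -> : l = s.+1 by lia.
have := congr1 (fun p => p.[(c * q ^+ s.+1)^-1]) H0; rewrite horner_sum hornerC /=.
rewrite (bigD1 (Ordinal (hs : s.+1 < N.+1)%N)) //= big1 => [|i hi]; last first.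
  rewrite hornerZ; case: (ltnP s.+1 i) => hsi; first by rewrite basis_cd_eval_lt ?mulr0.
  have hi' : (i < s.+1)%N.
    by rewrite ltn_neqAle hsi andbT; apply: contra hi => /eqP e; apply/eqP/val_inj.
  by rewrite IH ?mul0r //; lia.
by rewrite addr0 hornerZ => /eqP; rewrite mulf_eq0 (negPf (basis_cd_eval_diag hs)) orbF => /eqP.
Qed.

Lemma expansion_generic k : (k <= N)%N ->
  expansion N a b c d q k (Ccoef N a b c d q k) /\
  (forall D : nat -> C, expansion N a b c d q k D ->
     forall l : nat, (l <= N)%N -> D l = Ccoef N a b c d q k l).
Proof.
move=> hk.
have hexp : expansion N a b c d q k (Ccoef N a b c d q k).
  rewrite /expansion (expand_ab_cd a hq (gen_b G) hc hd hNM qnu (qsep_sym (gen_bc G))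
    (gen_bc G) (gen_cd G) (qsep_sym (gen_cd G)) hk).
  by apply: eq_bigr => l _; rewrite (Ccoef_conv G) // -ltnS.
split => // D HD l hl; apply/eqP; rewrite -subr_eq0; apply/eqP.
have hsum : \sum_(l < N.+1) (D l - Ccoef N a b c d q k l) *: basis_cd c d q N l = 0.
  by under eq_bigr do rewrite scalerBl; rewrite sumrB -HD -hexp subrr.
exact: (basis_cd_coef_eq0 (D := fun l => D l - Ccoef N a b c d q k l) hsum hl).
Qed.

End Uniqueness.

(* Variables [0..4] stand for [a, b, c, d, q], matching [pt5]. *)
Definition mvar (i : nat) : {mpoly C[5]} := 'X_(inord i).

Definition qnonunity_poly (M : nat) : {mpoly C[5]} := \prod_(e < M) (mvar 4 ^+ e.+1 - 1).

Definition qsep_poly (M i j : nat) : {mpoly C[5]} :=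
  \prod_(e1 < M.+1) \prod_(e2 < M.+1) (mvar i * mvar 4 ^+ e1 - mvar j * mvar 4 ^+ e2).

Definition genericity_poly (N : nat) : {mpoly C[5]} :=
  let M := (2 * N + 2)%N in
  mvar 4 * mvar 0 * mvar 1 * mvar 2 * mvar 3 * qnonunity_poly M *
  (qsep_poly M 0 2 * qsep_poly M 1 2 * qsep_poly M 1 3 * qsep_poly M 2 3).

Lemma meval_mvar i a b c d q : (i < 5)%N ->
  (mvar i).@[pt5 a b c d q] = nth 0 [:: a; b; c; d; q] i.
Proof. by move=> hi; rewrite /mvar mevalXU /pt5 inordK. Qed.

Lemma meval_qnonunity_poly M v :
  (qnonunity_poly M).@[v] = \prod_(e < M) ((mvar 4).@[v] ^+ e.+1 - 1).
Proof. by rewrite rmorph_prod; apply: eq_bigr => e _; rewrite rmorphB rmorphXn rmorph1. Qed.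

Lemma meval_qsep_poly M i j v : (qsep_poly M i j).@[v] =
  \prod_(e1 < M.+1) \prod_(e2 < M.+1)
    ((mvar i).@[v] * (mvar 4).@[v] ^+ e1 - (mvar j).@[v] * (mvar 4).@[v] ^+ e2).
Proof.
rewrite rmorph_prod; apply: eq_bigr => e1 _; rewrite rmorph_prod; apply: eq_bigr => e2 _.
by rewrite rmorphB !rmorphM !rmorphXn.
Qed.

Lemma qsep_of_poly M i j a b c d q : (i < 5)%N -> (j < 5)%N ->
  (qsep_poly M i j).@[pt5 a b c d q] != 0 ->
  qsep q (nth 0 [:: a; b; c; d; q] i) (nth 0 [:: a; b; c; d; q] j) M.
Proof.
move=> hi hj; rewrite meval_qsep_poly !meval_mvar // => /prodf_neq0 h e1 e2 h1 h2.
move/prodf_neq0: (h (Ordinal (h1 : e1 < M.+1)%N) isT) => /(_ (Ordinal (h2 : e2 < M.+1)%N) isT).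
by rewrite subr_eq0.
Qed.

Lemma qnonunity_of_poly M a b c d q :
  (qnonunity_poly M).@[pt5 a b c d q] != 0 -> qnonunity q M.
Proof.
rewrite meval_qnonunity_poly meval_mvar // => /prodf_neq0 h e he.
have he' : (e.-1 < M)%N by lia.
by have := h (Ordinal he') isT; rewrite /= prednK ?subr_eq0 //; lia.
Qed.

Lemma generic_of_poly N a b c d q :
  (genericity_poly N).@[pt5 a b c d q] != 0 -> generic (2 * N + 2) a b c d q.
Proof.
rewrite /genericity_poly !rmorphM /= !meval_mvar // !mulf_eq0 !negb_or.
move=> /andP[/andP[/andP[/andP[/andP[/andP[hq ha] hb] hc] hd] hqnu] hs].
move: hs => /andP[/andP[/andP[s_ac s_bc] s_bd] s_cd].
apply: Generic => //; first exact: qnonunity_of_poly hqnu.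
- exact: (qsep_of_poly _ _ s_ac).
- exact: (qsep_of_poly _ _ s_bc).
- exact: (qsep_of_poly _ _ s_bd).
- exact: (qsep_of_poly _ _ s_cd).
Qed.

Lemma odd_mul_exp2_neq x y e1 e2 : odd x -> odd y -> x != y -> (x * 2 ^ e1 != y * 2 ^ e2)%N.
Proof.
move=> ox oy xy; elim: e1 e2 => [|e1 IH] [|e2]; rewrite ?expn0 ?muln1 //.
- by apply/negP => /eqP/(congr1 odd); rewrite oddM oddX /= ox andbF.
- by apply/negP => /eqP/(congr1 odd); rewrite oddM oddX /= oy andbF.
- by rewrite !expnSr !mulnA eqn_mul2r /= IH.
Qed.

(* At [(a, b, c, d, q) = (3, 5, 7, 11, 2)] the progressions [x 2^e] of
   distinct odd [x] never meet. *)
Lemma genericity_poly_neq0 N : genericity_poly N != 0.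
Proof.
apply/eqP => H0.
have : (genericity_poly N).@[pt5 3%:R 5%:R 7%:R 11%:R 2%:R] = 0 by rewrite H0 meval0.
apply/eqP; rewrite /genericity_poly !rmorphM /= !meval_mvar //=.
repeat apply: mulf_neq0; rewrite ?pnatr_eq0 //.
- rewrite meval_qnonunity_poly meval_mvar //=; apply/prodf_neq0 => e _.
  by rewrite subr_eq0 -natrX -[1]/(1%:R) eqr_nat expnS muln_eq1.
all: rewrite meval_qsep_poly !meval_mvar //=; apply/prodf_neq0 => e1 _; apply/prodf_neq0 => e2 _.
all: by rewrite subr_eq0 -!natrX -!natrM eqr_nat odd_mul_exp2_neq.
Qed.

Unset Implicit Arguments.

Theorem mainTheorem4 (N : nat) :
  exists P : {mpoly C[5]}, P != 0 /\
    forall a b c d q : C, P.@[pt5 a b c d q] != 0 ->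
      forall k : nat, (k <= N)%N ->
        expansion N a b c d q k (Ccoef N a b c d q k) /\
        (forall D : nat -> C, expansion N a b c d q k D ->
           forall l : nat, (l <= N)%N -> D l = Ccoef N a b c d q k l).
Proof.
exists (genericity_poly N); split; first exact: genericity_poly_neq0.
move=> a b c d q hP k hk.
exact: (expansion_generic (generic_of_poly hP) (leqnn _) hk).
Qed.
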